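(* Let $\mathcal{A}$ be a finite set of positive integers, let $w \leqslant z$ be real numbers, and let $m_1, \dots, m_6$ be real numbers with $(m_1, m_2) \in \mathcal{U}$, $(m_3, m_4) \in \mathcal{U}$ and $(m_5, m_6) \in \mathcal{U}$. Writing $M^r_6 = \sum_{1 \leqslant i_1 < \cdots < i_r \leqslant 6} m_{i_1}\cdots m_{i_r}$ and $P = m_1m_2m_3m_4m_5m_6$, we have $$ S(\mathcal{A}, z) \leqslant S(\mathcal{A}, w) - \frac{M^5_6 - M^4_6 + M^3_6 - M^2_6 + M^1_6 - 1}{P} \sum_{w \leqslant p_1 < z} S(\mathcal{A}_{p_1}, w) + \frac{2(M^4_6 - 3M^3_6 + 7M^2_6 - 15M^1_6 + 31)}{P} \sum_{w \leqslant p_2 < p_1 < z} S(\mathcal{A}_{p_1p_2}, w) $$ $$ - \frac{6(M^3_6 - 6M^2_6 + 25M^1_6 - 90)}{P} \sum_{w \leqslant p_3 < p_2 < p_1 < z} S(\mathcal{A}_{p_1p_2p_3}, w) + \frac{24(M^2_6 - 10M^1_6 + 65)}{P} \sum_{w \leqslant p_4 < \cdots < p_1 < z} S(\mathcal{A}_{p_1p_2p_3p_4}, w) $$ $$ - \frac{120(M^1_6 - 15)}{P} \sum_{w \leqslant p_5 < \cdots < p_1 < z} S(\mathcal{A}_{p_1\cdots p_5}, w) + \frac{720}{P} \sum_{w \leqslant p_6 < \cdots < p_1 < z} S(\mathcal{A}_{p_1\cdots p_6}, w). $$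
   Context: Throughout, $p, p_1, p_2, \dots$ denote prime numbers. For a finite set $\mathcal{A}$ of positive integers and a positive integer $d$, $\mathcal{A}_d = \{a : ad \in \mathcal{A}\}$. For real $z$, $S(\mathcal{A}, z)$ denotes the number of $a \in \mathcal{A}$ having no prime factor less than $z$. Let $T = (0,1] \cup [2,3] \cup [4,5] \cup \cdots$, i.e. $T$ is the union of $(0,1]$ and the intervals $[k-1,k]$ over all odd integers $k \geqslant 3$, and let $\mathcal{U} = \{(x_1, x_2) : x_1, x_2 \in T,\ |x_1 - x_2| \leqslant 1\}$. *)

From mathcomp Require Import all_boot all_order all_algebra.
From mathcomp Require Import reals.
Set Implicit Arguments. Unset Strict Implicit. Unset Printing Implicit Defensive.
Import Order.TTheory GRing.Theory Num.Theory.
Local Open Scope ring_scope.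

Section Sieve.
Variable R : realType.

(* A finite set of positive integers is represented by a duplicate-free
   list [A : seq nat] (hypotheses [uniq A] and [all (> 0) A] in the theorem). *)

Definition Ad (A : seq nat) (d : nat) : seq nat :=
  [seq (a %/ d)%N | a <- A & (d %| a)%N].

Definition rough (z : R) (a : nat) : bool :=
  all (fun p => ~~ (p%:R < z)) (primes a).

Definition S (A : seq nat) (z : R) : nat := count (rough z) A.

(* the primes p with w <= p < z, in increasing order
   (every natural p with p < z satisfies p <= trunc z) *)
Definition primes_in (w z : R) : seq nat :=
  [seq p <- iota 0 (Num.truncn z).+1 | prime p && (w <= p%:R) && (p%:R < z)].

Definition sum1 (A : seq nat) (w z : R) : R :=
  \sum_(p1 <- primes_in w z) (S (Ad A p1) w)%:R.
Definition sum2 (A : seq nat) (w z : R) : R :=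
  \sum_(p1 <- primes_in w z) \sum_(p2 <- primes_in w z | (p2 < p1)%N)
    (S (Ad A (p1 * p2)) w)%:R.
Definition sum3 (A : seq nat) (w z : R) : R :=
  \sum_(p1 <- primes_in w z) \sum_(p2 <- primes_in w z | (p2 < p1)%N)
  \sum_(p3 <- primes_in w z | (p3 < p2)%N)
    (S (Ad A (p1 * p2 * p3)) w)%:R.
Definition sum4 (A : seq nat) (w z : R) : R :=
  \sum_(p1 <- primes_in w z) \sum_(p2 <- primes_in w z | (p2 < p1)%N)
  \sum_(p3 <- primes_in w z | (p3 < p2)%N) \sum_(p4 <- primes_in w z | (p4 < p3)%N)
    (S (Ad A (p1 * p2 * p3 * p4)) w)%:R.
Definition sum5 (A : seq nat) (w z : R) : R :=
  \sum_(p1 <- primes_in w z) \sum_(p2 <- primes_in w z | (p2 < p1)%N)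
  \sum_(p3 <- primes_in w z | (p3 < p2)%N) \sum_(p4 <- primes_in w z | (p4 < p3)%N)
  \sum_(p5 <- primes_in w z | (p5 < p4)%N)
    (S (Ad A (p1 * p2 * p3 * p4 * p5)) w)%:R.
Definition sum6 (A : seq nat) (w z : R) : R :=
  \sum_(p1 <- primes_in w z) \sum_(p2 <- primes_in w z | (p2 < p1)%N)
  \sum_(p3 <- primes_in w z | (p3 < p2)%N) \sum_(p4 <- primes_in w z | (p4 < p3)%N)
  \sum_(p5 <- primes_in w z | (p5 < p4)%N) \sum_(p6 <- primes_in w z | (p6 < p5)%N)
    (S (Ad A (p1 * p2 * p3 * p4 * p5 * p6)) w)%:R.

Definition inT (x : R) : Prop :=
  (0 < x <= 1) \/ exists k : nat, [/\ odd k, (3 <= k)%N & (k.-1)%:R <= x <= k%:R].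

Definition inU (x1 x2 : R) : Prop := [/\ inT x1, inT x2 & `|x1 - x2| <= 1].

Definition Msym (m : 'I_6 -> R) (r : nat) : R :=
  \sum_(I : {set 'I_6} | #|I| == r) \prod_(i in I) m i.

Definition m6 (m1 m2 m3 m4 m5 m6 : R) : 'I_6 -> R :=
  fun i => nth 0 [:: m1; m2; m3; m4; m5; m6] i.

End Sieve.

From Pilot Require Import Defs.
From mathcomp Require Import all_boot all_order all_algebra.
From mathcomp Require Import reals.
From mathcomp Require Import zify ring lra.
Import Order.TTheory GRing.Theory Num.Theory.

(* Both sides are additive over A, so it suffices to compare the contributions
   of a single a in A.  If a has no prime factor below w and exactly n prime
   factors in [w, z), then by the hockey-stick identity it is counted 'C(n, k)
   times by the k-fold sum, so its contribution to the right-hand side is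
   f(n) = (m1 - n) ... (m6 - n) / P, the coefficients being those of the
   expansion of this degree-6 polynomial in the basis 'C(n, k).  No integer
   lies strictly between the two entries of a pair in U, so f(n) >= 0; and if
   a has no prime factor below z then n = 0 and f(0) = 1. *)

Lemma sum_bin_count_lt (P : pred nat) (s : seq nat) k : sorted ltn s ->
  \sum_(q <- s | P q) 'C(count (fun q' => (q' < q) && P q') s, k) =
  'C(count P s, k.+1).
Proof.
rewrite (sorted_pairwise ltn_trans).
elim/last_ind: s => [|s y IHs]; first by rewrite big_nil bin0n.
rewrite pairwise_rcons => /andP[/allP lt_s_y /IHs {}IHs].
have count_rcons (Q : pred nat) : count Q (rcons s y) = count Q s + Q y.
  by rewrite -cats1 count_cat /= addn0.
rewrite big_rcons !count_rcons ltnn addn0 big_seq_cond.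
under eq_bigr => q /andP[/lt_s_y lt_q_y _] do rewrite count_rcons ltnNge ltnW // addn0.
rewrite -big_seq_cond IHs (eq_in_count (a1 := fun q => (q < y) && P q) (a2 := P));
  last by move=> q /lt_s_y ->.
by case: (P y); rewrite /= ?addn0 // addn1 binS addnC.
Qed.

Lemma sum_bin_count_lt_bounded (P : pred nat) (s : seq nat) k p : sorted ltn s ->
  \sum_(q <- s | (q < p) && P q) 'C(count (fun q' => (q' < q) && P q') s, k) =
  'C(count (fun q => (q < p) && P q) s, k.+1).
Proof.
move=> s_sorted; rewrite -sum_bin_count_lt //; apply: eq_bigr => q /andP[lt_qp _].
congr 'C(_, _); apply: eq_count => q'; case: (ltnP q' q) => //= lt_q'q.
by rewrite (ltn_trans lt_q'q lt_qp).
Qed.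

Local Open Scope ring_scope.

Lemma natr_ffact (R : pzRingType) n k :
  (n ^_ k)%:R = \prod_(i < k) (n%:R - i%:R) :> R.
Proof.
elim: k => [|k IHk]; first by rewrite big_ord0.
rewrite big_ord_recr /= -IHk ffactnSr natrM.
by case: (leqP k n) => [/natrB -> //|lt_nk]; rewrite ffact_small // !mul0r.
Qed.

Lemma natr_bin (R : numFieldType) n k :
  'C(n, k)%:R = \prod_(i < k) (n%:R - i%:R) / k`!%:R :> R.
Proof. by rewrite -natr_ffact -bin_ffact natrM mulfK // pnatr_eq0 -lt0n fact_gt0. Qed.

Lemma natr_count (R : pzSemiRingType) (T : Type) (P : pred T) (s : seq T) :
  (count P s)%:R = \sum_(x <- s) (P x)%:R :> R.
Proof.
by rewrite -sum1_count natr_sum big_mkcond; apply: eq_bigr => x _; case: (P x).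
Qed.

(* [sum(k+1) A w z] is convertible to
   [\sum_(p <- primes_in w z) chain_sum F (primes_in w z) k p p]
   with [F d = (S (Ad A d) w)%:R]. *)
Fixpoint chain_sum {V : nmodType} (F : nat -> V) (s : seq nat) (k d p : nat) : V :=
  if k is k'.+1 then \sum_(q <- s | (q < p)%N) chain_sum F s k' (d * q) q else F d.

Lemma chain_sum_sum (V : nmodType) (I : Type) (r : seq I)
    (G : nat -> V) (F : I -> nat -> V) s k :
  (forall d, G d = \sum_(i <- r) F i d) ->
  forall d p, chain_sum G s k d p = \sum_(i <- r) chain_sum (F i) s k d p.
Proof.
move=> GE; elim: k => [|k IHk] d p //=.
by under eq_bigr do rewrite IHk; rewrite exchange_big.
Qed.

Section Rough.
Context {R : realType}.
Implicit Types w z : R.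

Lemma roughM w x y : (0 < x)%N -> (0 < y)%N ->
  rough w (x * y) = rough w x && rough w y.
Proof.
move=> x_gt0 y_gt0; rewrite /rough -all_cat.
by apply: eq_all_r => p; rewrite primesM // mem_cat.
Qed.

Lemma rough_prime w p : prime p -> rough w p = ~~ (p%:R < w).
Proof. by move=> p_prime; rewrite /rough primes_prime //= andbT. Qed.

Lemma rough_divn w a d : (0 < a)%N -> (d %| a)%N -> rough w d ->
  rough w (a %/ d) = rough w a.
Proof.
move=> a_gt0 d_dvd_a d_rough; have d_gt0 := dvdn_gt0 a_gt0 d_dvd_a.
have quot_gt0 : (0 < a %/ d)%N by rewrite divn_gt0 // dvdn_leq.
by rewrite -{2}(divnK d_dvd_a) roughM // d_rough andbT.
Qed.

Lemma rough_le {w z : R} {a : nat} : w <= z -> rough z a -> rough w a.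
Proof.
move=> le_wz /allP z_rough; apply/allP => p /z_rough.
by apply: contra => /lt_le_trans->.
Qed.

Lemma S_Ad A d w :
  S (Ad A d) w = count (fun a => (d %| a)%N && rough w (a %/ d)) A.
Proof. by rewrite /S /Ad count_map count_filter; apply: eq_count => a; rewrite /= andbC. Qed.

End Rough.

Section ChainSums.
Context {R : realType} {w : R} {s : seq nat}.
Hypotheses (s_sorted : sorted ltn s) (s_prime : {in s, forall q, prime q})
  (s_rough : {in s, forall q, rough w q}).

Lemma chain_sum_indicator a k : (0 < a)%N -> forall d p, (0 < d)%N -> rough w d ->
  {in s, forall q, q < p -> coprime d q}%N ->
  chain_sum (fun d => ((d %| a)%N && rough w (a %/ d))%:R) s k d p =
  ((d %| a)%N && rough w a)%:R * 'C(count (fun q => (q < p)%N && (q %| a)%N) s, k)%:R :> R.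
Proof.
move=> a_gt0; elim: k => [|k IHk] d p d_gt0 d_rough d_coprime /=.
  by rewrite bin0 mulr1; case: (boolP (d %| a)%N) => //= /rough_divn->.
rewrite big_seq_cond.
under eq_bigr => q /andP[q_s lt_qp].
  have q_gt0 := prime_gt0 (s_prime _ q_s).
  have dq_gt0 : (0 < d * q)%N by rewrite muln_gt0 d_gt0.
  have dq_rough : rough w (d * q) by rewrite roughM // d_rough s_rough.
  have dq_coprime : {in s, forall q', q' < q -> coprime (d * q) q'}%N.
    move=> q' q'_s lt_q'q; rewrite coprimeMl d_coprime ?(ltn_trans lt_q'q) //=.
    by rewrite prime_coprime ?dvdn_prime2 ?s_prime ?gtn_eqF.
  rewrite IHk // Gauss_dvd ?(d_coprime _ q_s lt_qp) // andbAC -mulnb natrM -mulrA.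
  over.
rewrite -big_seq_cond -mulr_sumr -sum_bin_count_lt_bounded // natr_sum big_mkcondr /=.
by congr (_ * _); apply: eq_bigr => q _; case: (q %| a)%N; rewrite ?mul1r ?mul0r.
Qed.

Lemma sum_chain_sum_indicator a k : (0 < a)%N ->
  \sum_(p <- s) chain_sum (fun d => ((d %| a)%N && rough w (a %/ d))%:R) s k p p =
  (rough w a)%:R * 'C(count (dvdn^~ a) s, k.+1)%:R :> R.
Proof.
move=> a_gt0; rewrite big_seq.
under eq_bigr => p p_s.
  have p_coprime : {in s, forall q, q < p -> coprime p q}%N.
    by move=> q q_s lt_qp; rewrite prime_coprime ?dvdn_prime2 ?s_prime ?gtn_eqF.
  have p_gt0 := prime_gt0 (s_prime _ p_s).
  rewrite chain_sum_indicator //; last exact: s_rough.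
  rewrite andbC -mulnb natrM -mulrA.
  over.
rewrite -big_seq -mulr_sumr -sum_bin_count_lt // natr_sum [in RHS]big_mkcond /=.
by congr (_ * _); apply: eq_bigr => q _; case: (q %| a)%N; rewrite ?mul1r ?mul0r.
Qed.

Lemma sum_chain_sum_S A k : all (fun a => 0 < a)%N A ->
  \sum_(p <- s) chain_sum (fun d => (S (Ad A d) w)%:R) s k p p =
  \sum_(a <- A) (rough w a)%:R * 'C(count (dvdn^~ a) s, k.+1)%:R :> R.
Proof.
move=> /allP A_pos.
have chainE p : chain_sum (fun d => (S (Ad A d) w)%:R) s k p p =
    \sum_(a <- A) chain_sum (fun d => ((d %| a)%N && rough w (a %/ d))%:R) s k p p.
  by apply: chain_sum_sum => d; rewrite S_Ad natr_count.
under eq_bigr do rewrite chainE.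
rewrite exchange_big big_seq [RHS]big_seq; apply: eq_bigr => a /A_pos a_gt0.
exact: sum_chain_sum_indicator.
Qed.

End ChainSums.

Section PrimesIn.
Context {R : realType}.
Implicit Types w z : R.

Lemma sorted_primes_in w z : sorted ltn (primes_in w z).
Proof. exact: sorted_filter ltn_trans _ _ (iota_ltn_sorted _ _). Qed.

Lemma primes_in_bounds w z q :
  q \in primes_in w z -> [/\ prime q, w <= q%:R & q%:R < z].
Proof. by rewrite mem_filter => /andP[/andP[/andP[]]]. Qed.

Lemma prime_primes_in w z : {in primes_in w z, forall q, prime q}.
Proof. by move=> q /primes_in_bounds[]. Qed.

Lemma rough_primes_in w z : {in primes_in w z, forall q, rough w q}.
Proof. by move=> q /primes_in_bounds[q_prime le_wq _]; rewrite rough_prime // -leNgt. Qed.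

Lemma count_dvdn_primes_in w z a : (0 < a)%N -> rough z a ->
  count (dvdn^~ a) (primes_in w z) = 0%N.
Proof.
move=> a_gt0 /allP a_rough; apply/eqP; rewrite eqn0Ngt -has_count.
apply/hasPn => q /primes_in_bounds[q_prime _ lt_qz]; apply: contraTN lt_qz => q_dvd_a.
by apply: a_rough; rewrite mem_primes q_prime a_gt0.
Qed.

End PrimesIn.

Section Admissible.
Context {R : realType}.

Lemma inT_gt0 (x : R) : inT x -> 0 < x.
Proof.
case=> [/andP[] // | [k [_ k_ge3 /andP[le_k1x _]]]].
by apply: lt_le_trans le_k1x; rewrite ltr0n; lia.
Qed.

Lemma inT_even (x : R) n : inT x -> n%:R < x < n.+1%:R -> ~~ odd n.
Proof.
case=> [/andP[_ le_x1] | [k [odd_k k_ge3 /andP[le_k1x le_xk]]]] /andP[lt_nx lt_xn1].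
  suff -> : n = 0%N by [].
  by apply/eqP; rewrite -leqn0 -ltnS -(ltr_nat R) (lt_le_trans lt_nx).
have lt_nk : (n < k)%N by rewrite -(ltr_nat R) (lt_le_trans lt_nx).
have lt_k1n1 : (k.-1 < n.+1)%N by rewrite -(ltr_nat R) (le_lt_trans le_k1x).
have -> : n = k.-1 by lia.
by case: k odd_k {k_ge3 le_k1x le_xk lt_nk lt_k1n1}.
Qed.

Lemma inU_mulr_ge0 (a b : R) n : inU a b -> 0 <= (a - n%:R) * (b - n%:R).
Proof.
case=> Ta Tb; wlog le_ab : a b Ta Tb / a <= b => [hwlog|].
  by case: (leP a b) => [|/ltW] le_ab; [|rewrite mulrC distrC]; apply: hwlog.
rewrite ler_norml => /andP[le_ba1 _].
case: (leP n%:R a) => [le_na|lt_an]; first by nra.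
case: (leP b n%:R) => [le_bn|lt_nb]; first by nra.
case: n lt_an lt_nb => [|n] lt_an lt_nb; first by have := inT_gt0 _ Ta; lra.
rewrite -natr1 in lt_an lt_nb.
have even_n : ~~ odd n by apply: (inT_even _ _ Ta); apply/andP; split; lra.
have /negP[] : ~~ odd n.+1.
  by apply: (inT_even _ _ Tb); rewrite -!natr1; apply/andP; split; lra.
by rewrite /= even_n.
Qed.

End Admissible.

Section SieveWeight.
Context {R : realType}.

Lemma prodrDr_Msym (m : 'I_6 -> R) y :
  \prod_(i < 6) (m i + y) = \sum_(r < 7) Msym m r * y ^+ (6 - r).
Proof.
have card_le6 (J : {set 'I_6}) : (#|J| < 7)%N.
  by rewrite ltnS (leq_trans (max_card _)) ?card_ord.
have term (J : {set 'I_6}) :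
    \prod_(i < 6) (if i \in J then m i else y) = (\prod_(i in J) m i) * y ^+ (6 - #|J|).
  rewrite (bigID (mem J)) /=; congr (_ * _); first by apply: eq_bigr => i ->.
  rewrite (eq_bigr (fun=> y)) => [|i /negbTE -> //].
  have := cardC J; rewrite card_ord => /(congr1 (subn^~ #|J|)).
  by rewrite prodr_const addKn => <-.
rewrite bigA_distr (eq_bigr _ (fun J _ => term J)).
rewrite (partition_big (fun J : {set 'I_6} => inord #|J| : 'I_7) xpredT) //=.
apply: eq_bigr => r _; rewrite /Msym mulr_suml.
apply: eq_big => J; first by rewrite -(inj_eq val_inj) /= inordK.
by rewrite -(inj_eq val_inj) /= inordK // => /eqP ->.
Qed.

Lemma Msym0 (m : 'I_6 -> R) : Msym m 0 = 1.
Proof.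
rewrite /Msym (eq_bigl (pred1 set0)) => [|J]; last by rewrite /= cards_eq0.
by rewrite big_pred1_eq big_set0.
Qed.

Lemma Msym6 (m : 'I_6 -> R) : Msym m 6 = \prod_(i < 6) m i.
Proof.
rewrite /Msym (eq_bigl (pred1 setT)) => [|J]; last first.
  have := max_card J; rewrite card_ord => le_J6.
  by rewrite /= eqEcard subsetT cardsT card_ord eqn_leq le_J6.
by rewrite big_pred1_eq; apply: eq_bigl => i; rewrite in_setT.
Qed.

Definition sieve_weight (M : nat -> R) (P : R) (n : nat) : R :=
  1 - (M 5%N - M 4%N + M 3%N - M 2%N + M 1%N - 1) / P * 'C(n, 1)%:R
    + 2 * (M 4%N - 3 * M 3%N + 7 * M 2%N - 15 * M 1%N + 31) / P * 'C(n, 2)%:R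
    - 6 * (M 3%N - 6 * M 2%N + 25 * M 1%N - 90) / P * 'C(n, 3)%:R
    + 24 * (M 2%N - 10 * M 1%N + 65) / P * 'C(n, 4)%:R
    - 120 * (M 1%N - 15) / P * 'C(n, 5)%:R
    + 720 / P * 'C(n, 6)%:R.

Lemma sieve_weightE (m : 'I_6 -> R) n : \prod_(i < 6) m i != 0 ->
  sieve_weight (Msym m) (\prod_(i < 6) m i) n =
  \prod_(i < 6) (m i - n%:R) / \prod_(i < 6) m i.
Proof.
rewrite prodrDr_Msym -Msym6; set P := Msym m 6 => P_neq0.
rewrite /sieve_weight !natr_bin !big_ord_recr !big_ord0 /= Msym0.
by rewrite -/P !factS fact0; field.
Qed.

Lemma sieve_weight0 M P : sieve_weight M P 0 = 1.
Proof. by rewrite /sieve_weight !bin0n /= !mulr0 !subr0 !addr0. Qed.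

Lemma prod_m6 (f : R -> R) (m1 m2 m3 m4 m5 m6 : R) :
  \prod_(i < 6) f (Defs.m6 m1 m2 m3 m4 m5 m6 i) = f m1 * f m2 * f m3 * f m4 * f m5 * f m6.
Proof. by rewrite !big_ord_recr big_ord0 /= mul1r. Qed.

Lemma sieve_weight_ge0 (m1 m2 m3 m4 m5 m6 : R) n :
  inU m1 m2 -> inU m3 m4 -> inU m5 m6 ->
  0 <= sieve_weight (Msym (Defs.m6 m1 m2 m3 m4 m5 m6)) (m1 * m2 * m3 * m4 * m5 * m6) n.
Proof.
move=> U12 U34 U56.
have P_gt0 : 0 < m1 * m2 * m3 * m4 * m5 * m6.
  by case: U12 U34 U56 => [T1 T2 _] [T3 T4 _] [T5 T6 _]; rewrite !mulr_gt0 // inT_gt0.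
rewrite -(prod_m6 id) sieve_weightE ?(prod_m6 id) ?gt_eqF // (prod_m6 (fun x => x - n%:R)).
apply: divr_ge0; last exact: ltW.
set x := n%:R; have -> : (m1 - x) * (m2 - x) * (m3 - x) * (m4 - x) * (m5 - x) * (m6 - x) =
  ((m1 - x) * (m2 - x)) * ((m3 - x) * (m4 - x)) * ((m5 - x) * (m6 - x)) by ring.
by rewrite {}/x; apply: mulr_ge0; first apply: mulr_ge0; apply: inU_mulr_ge0.
Qed.

Lemma rough_le_sieve_weight M P (w z : R) a : w <= z -> (0 < a)%N ->
  (forall n, 0 <= sieve_weight M P n) ->
  (rough z a)%:R <= (rough w a)%:R * sieve_weight M P (count (dvdn^~ a) (primes_in w z)).
Proof.
move=> le_wz a_gt0 weight_ge0; have [a_z_rough|_] := boolP (rough z a).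
  by rewrite count_dvdn_primes_in // sieve_weight0 (rough_le le_wz a_z_rough) mulr1.
by rewrite mulr_ge0.
Qed.

End SieveWeight.

Theorem theorem4 (R : realType) (A : seq nat) (w z : R)
    (m1 m2 m3 m4 m5 m6 : R) :
  uniq A -> all (fun a => (0 < a)%N) A -> w <= z ->
  inU m1 m2 -> inU m3 m4 -> inU m5 m6 ->
  let m := Defs.m6 m1 m2 m3 m4 m5 m6 in
  let M := Msym m in
  let P := m1 * m2 * m3 * m4 * m5 * m6 in
  (S A z)%:R <=
    (S A w)%:R
    - (M 5%N - M 4%N + M 3%N - M 2%N + M 1%N - 1) / P * sum1 A w z
    + 2 * (M 4%N - 3 * M 3%N + 7 * M 2%N - 15 * M 1%N + 31) / P * sum2 A w z
    - 6 * (M 3%N - 6 * M 2%N + 25 * M 1%N - 90) / P * sum3 A w z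
    + 24 * (M 2%N - 10 * M 1%N + 65) / P * sum4 A w z
    - 120 * (M 1%N - 15) / P * sum5 A w z
    + 720 / P * sum6 A w z.
Proof.
move=> _ A_pos le_wz U12 U34 U56; cbv zeta.
have sumE k := sum_chain_sum_S (sorted_primes_in w z) (prime_primes_in w z)
  (rough_primes_in w z) A k A_pos.
rewrite (sumE 0%N : sum1 A w z = _) (sumE 1%N : sum2 A w z = _) (sumE 2%N : sum3 A w z = _).
rewrite (sumE 3%N : sum4 A w z = _) (sumE 4%N : sum5 A w z = _) (sumE 5%N : sum6 A w z = _).
rewrite /S !natr_count !(big_distrr (r := A)).
rewrite -sumrB -big_split -sumrB -big_split -sumrB -big_split /=.
rewrite big_seq [X in _ <= X]big_seq; apply: ler_sum => a a_A.
set M := Msym _; set P := m1 * _ * _ * _ * _ * _; set n := count (dvdn^~ a) (primes_in w z).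
rewrite [X in _ <= X](_ : _ = (rough w a)%:R * sieve_weight M P n); last first.
  by rewrite /sieve_weight; ring.
apply: rough_le_sieve_weight => //; first exact: (allP A_pos).
by move=> k; apply: sieve_weight_ge0.
Qed.
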